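(* Let $n\ge 4$ and let $L=(l_1,\dots,l_n)$ be a generic length vector satisfying the strict triangle inequality. For $k=1,\dots,n$ let $N_k$ denote the number of short subsets of $[n]$ of cardinality $k$. Then the number of vertices of $\Gamma(L)$ equals $$\sum_{k=1}^n N_k\,2^{\,n-k}\;-\;2\cdot 3^{\,n-1}\;+\;2^n .$$
   Context: Let $n\ge 4$ and $L=(l_1,\dots,l_n)$ be positive reals with $l_i<\sum_{j\ne i}l_j$ for every $i$ (strict triangle inequality), and generic: there is no $J\subseteq[n]$ with $\sum_{i\in J}l_i=\sum_{i\notin J}l_i$. Here $[n]=\{1,\dots,n\}$ and $|L|=\sum_{i=1}^n l_i$. A set $I\subseteq[n]$ is short if $\sum_{i\in I}l_i<|L|/2$ and long otherwise. A cyclically ordered partition of $[n]$ into $k$ parts is a sequence $(A_1,\dots,A_k)$ of pairwise disjoint nonempty sets with union $[n]$, considered up to cyclic shifts $(A_1,\dots,A_k)\sim(A_2,\dots,A_k,A_1)$; there is no ordering inside a part. It is admissible if every part is short. The graph $\Gamma(L)$ has as vertices the admissible cyclically ordered partitions of $[n]$ into 3 parts, written $(I,J,K)$, and as edges the admissible cyclically ordered partitions into 4 parts $(A,B,C,D)$; such an edge is incident to each of the partitions $(A\cup B,C,D)$, $(A,B\cup C,D)$, $(A,B,C\cup D)$, $(D\cup A,B,C)$ that is admissible. Equivalently, two vertices are adjacent iff one is obtained from the other by moving a nonempty proper subset of one part into another part. ($\Gamma(L)$ is the 1-skeleton of a cell decomposition of the moduli space of planar configurations of $L$.) *)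

From HB Require Import structures.
From mathcomp Require Import all_boot all_order all_algebra.
Set Implicit Arguments. Unset Strict Implicit. Unset Printing Implicit Defensive.
Import Order.TTheory GRing.Theory Num.Theory.
Local Open Scope ring_scope.

Section Linkage.
Variables (R : realFieldType) (n : nat) (l : 'I_n -> R).

Definition totlen : R := \sum_(i < n) l i.

Definition short (I : {set 'I_n}) : bool := \sum_(i in I) l i < totlen / 2%:R.

Definition positive_lengths : Prop := forall i, 0 < l i.

Definition strict_triangle : Prop :=
  forall i, l i < \sum_(j < n | j != i) l j.

Definition generic : Prop :=
  forall J : {set 'I_n}, \sum_(i in J) l i != \sum_(i in ~: J) l i.

Definition triple := ({set 'I_n} * {set 'I_n} * {set 'I_n})%type.

Definition admissible3 (t : triple) : bool :=
  let I := t.1.1 in let J := t.1.2 in let K := t.2 in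
  [&& I != set0, J != set0, K != set0,
      [disjoint I & J], [disjoint J & K], [disjoint I & K],
      I :|: J :|: K == setT &
      [&& short I, short J & short K]].

Definition rot3 (t : triple) : triple :=
  (t.1.2, t.2, t.1.1).

Definition cyc_class (t : triple) : {set triple} :=
  [set t; rot3 t; rot3 (rot3 t)].

(* vertices of Gamma(L): admissible cyclically ordered partitions into 3 parts,
   i.e. classes of admissible ordered triples up to cyclic shift *)
Definition vertices : {set {set triple}} :=
  [set cyc_class t | t in [pred t | admissible3 t]].

Definition Nshort (k : nat) : nat := #|[set I : {set 'I_n} | short I & #|I| == k]|.

End Linkage.

From HB Require Import structures.
From mathcomp Require Import all_boot all_order all_algebra.
From mathcomp Require Import zify lra.
Import Order.TTheory GRing.Theory Num.Theory.
Set Implicit Arguments. Unset Strict Implicit. Unset Printing Implicit Defensive.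

(* Consider all ordered triples (I,J,K) of pairwise disjoint, possibly empty
   sets covering [n]; there are 3^n of them (colourings of [n] by 3 colours).
   For a generic positive L a set is short iff its complement is long, and
   shortness is inherited by subsets; hence at most one part of such a triple
   is long, so every triple is either all-short or has exactly one long part.
   All-short triples automatically have nonempty parts, so they are exactly
   the admissible ordered triples.  The three kinds "part i is long" are
   exchanged by cyclic rotation, and the triples whose first part is short are
   counted by choosing the short set I and then J inside its complement:
   sum_(I short) 2^(n-|I|).  This gives
       #admissible = 3^n - 3 (3^n - sum_(I short) 2^(n-|I|)).
   Finally the vertices are the rotation classes of admissible triples, each
   of size 3, and the empty set (which is short) contributes the term 2^n. *)

Section OrderedTriples.
Variable n : nat.
Implicit Types (t : triple n) (I J K : {set 'I_n}).

Definition part3 t : bool :=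
  [&& [disjoint t.1.1 & t.1.2], [disjoint t.1.2 & t.2], [disjoint t.1.1 & t.2]
    & t.1.1 :|: t.1.2 :|: t.2 == setT].

Lemma rot3K t : rot3 (rot3 (rot3 t)) = t.
Proof. by case: t => [[I J] K]. Qed.

Lemma rot3_inj : injective (@rot3 n).
Proof. by apply: (can_inj (g := fun t => rot3 (rot3 t))) => t; rewrite rot3K. Qed.

Lemma part3_rot t : part3 (rot3 t) = part3 t.
Proof.
case: t => [[I J] K]; rewrite /part3 /= (disjoint_sym K I) (disjoint_sym J I).
have -> : J :|: K :|: I = I :|: J :|: K by rewrite setUC setUA.
by case: [disjoint I & J]; case: [disjoint J & K]; case: [disjoint I & K].
Qed.

Definition colour_classes (f : {ffun 'I_n -> 'I_3}) : triple n :=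
  ([set i | f i == 0 :> nat], [set i | f i == 1 :> nat], [set i | f i == 2 :> nat]).

Lemma colour_classes_inj : injective colour_classes.
Proof.
move=> f g [/setP e0 /setP e1 _]; apply/ffunP => i; apply: val_inj.
move: (e0 i) (e1 i); rewrite !inE; case: (f i) (g i) => [a ha] [b hb] /=.
by move: ha hb; case: a => [|[|[|a]]]; case: b => [|[|[|b]]].
Qed.

Lemma part3_colour_classes :
  [set t | part3 t] = [set colour_classes f | f in [set: {ffun 'I_n -> 'I_3}]].
Proof.
apply/setP => t; rewrite inE; apply/idP/imsetP.
- case: t => [[I J] K] /and4P[dIJ dJK dIK /eqP cover].
  pose f := [ffun i => if i \in I then @Ordinal 3 0 isT
                       else if i \in J then @Ordinal 3 1 isT else @Ordinal 3 2 isT].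
  exists f; rewrite ?inE //.
  have in_one_part i : [/\ (i \in I) || (i \in J) || (i \in K),
      ~~ ((i \in I) && (i \in J)), ~~ ((i \in J) && (i \in K))
      & ~~ ((i \in I) && (i \in K))].
    split; first by move/setP: cover => /(_ i); rewrite !inE.
    + by apply/negP => /andP[a b]; move: (disjointFr dIJ a); rewrite b.
    + by apply/negP => /andP[a b]; move: (disjointFr dJK a); rewrite b.
    + by apply/negP => /andP[a b]; move: (disjointFr dIK a); rewrite b.
  rewrite /colour_classes; congr (_, _, _); apply/setP => i; rewrite inE ffunE;
  by case: (in_one_part i); case: (i \in I); case: (i \in J); case: (i \in K).
- case=> f _ ->; rewrite /part3 /colour_classes /= -!setI_eq0.
  by apply/and4P; split; apply/eqP/setP => i; rewrite !inE //;
     case: (f i) => [[|[|[|a]]] ha].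
Qed.

Lemma card_part3 : #|[set t | part3 t]| = 3 ^ n.
Proof.
rewrite part3_colour_classes card_imset ?cardsT ?card_ffun ?card_ord //.
exact: colour_classes_inj.
Qed.

(* With first part I fixed, a 3-partition is determined by J, any subset of ~: I. *)
Lemma card_part3_first I :
  #|[set t | part3 t && (t.1.1 == I)]| = (2 ^ (n - #|I|))%N.
Proof.
have -> : (n - #|I| = #|~: I|)%N by have := cardsC I; rewrite card_ord; lia.
rewrite -card_powerset.
have -> : [set t | part3 t && (t.1.1 == I)] =
          [set (I, J, ~: (I :|: J)) | J in powerset (~: I)].
  apply/setP => t; rewrite inE; apply/idP/imsetP.
  - case: t => [[I' J] K] /andP[/and4P[dIJ dJK dIK /eqP cover] /eqP /= eI].
    subst I'; exists J; first by rewrite powersetE -disjoints_subset disjoint_sym.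
    congr (_, _, _); apply/setP => i; rewrite !inE.
    move/setP: cover => /(_ i); rewrite !inE.
    move: (disjointFr dJK (x := i)) (disjointFr dIK (x := i)).
    by case: (i \in K); case: (i \in I); case: (i \in J) => //= [/(_ isT)|_ /(_ isT)].
  - case=> J; rewrite powersetE => sJ ->; rewrite /part3 /= eqxx andbT.
    rewrite (disjoint_sym I J) disjoints_subset sJ -!setI_eq0 /=.
    by apply/and3P; split; apply/eqP/setP => i; rewrite !inE;
       case: (i \in I); case: (i \in J).
by rewrite card_imset // => J1 J2 [].
Qed.

Lemma card_cyc_class t :
  part3 t -> t.1.1 != set0 -> t.1.2 != set0 -> #|cyc_class t| = 3%N.
Proof.
have neq_disj (A B : {set 'I_n}) : A != set0 -> [disjoint A & B] -> (A == B) = false.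
  move=> nA dAB; apply/negbTE; apply: contra nA => /eqP AB.
  by move: dAB; rewrite AB -setI_eq0 setIid.
case: t => [[I J] K] /and4P[dIJ dJK dIK _] /= nI nJ.
rewrite /cyc_class /rot3 /= setUC cardsU1 cards2 !inE !xpair_eqE /=.
by rewrite (neq_disj I J nI dIJ) (neq_disj J K nJ dJK)
           (neq_disj I K nI dIK) !andbF.
Qed.

Lemma cyc_class_rot t : cyc_class (rot3 t) = cyc_class t.
Proof. by apply/setP => s; rewrite !inE rot3K orbC orbA. Qed.

Lemma cyc_class_mem t s : s \in cyc_class t -> cyc_class s = cyc_class t.
Proof. by rewrite !inE => /orP[/orP[]|] /eqP ->; rewrite ?cyc_class_rot. Qed.

Lemma cyc_classes_partition (P : pred (triple n)) :
  (forall t, P (rot3 t) = P t) ->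
  partition [set cyc_class t | t in P] [set t | P t].
Proof.
move=> P_rot; apply/and3P; split.
- rewrite cover_imset; apply/eqP/setP => s; rewrite inE; apply/bigcupP/idP.
    case=> t Pt; rewrite /cyc_class !inE => /orP[/orP[]|] /eqP ->;
    by rewrite ?P_rot.
  by move=> Ps; exists s; rewrite /cyc_class ?inE ?eqxx.
- apply/trivIsetP => A B /imsetP[t _ ->] /imsetP[s _ ->] neq.
  rewrite -setI_eq0; apply/eqP/setP => x; rewrite in_setI in_set0.
  apply/negP => /andP[xt xs]; move/eqP: neq; apply.
  by rewrite -(cyc_class_mem xt) (cyc_class_mem xs).
- apply/imsetP => [[t _ e]].
  have : t \in cyc_class t by rewrite /cyc_class !inE eqxx.
  by rewrite -e inE.
Qed.

End OrderedTriples.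

Section ShortSets.
Variables (R : realFieldType) (n : nat) (l : 'I_n -> R).
Hypotheses (hpos : positive_lengths l) (hgen : generic l).
Local Open Scope ring_scope.
Implicit Types (t : triple n) (A B : {set 'I_n}).

Lemma sum_setC A : \sum_(i in A) l i + \sum_(i in ~: A) l i = totlen l.
Proof.
rewrite /totlen [RHS](bigID (fun i => i \in A)) /=.
by congr (_ + _); apply: eq_bigl => i; rewrite ?inE.
Qed.

(* By genericity, exactly one of A and its complement is short. *)
Lemma short_setC A : short l (~: A) = ~~ short l A.
Proof.
have := hgen A; have := sum_setC A; rewrite /short.
set a := \sum_(i in A) l i; set b := \sum_(i in ~: A) l i => e.
case: (ltgtP a (totlen l / 2%:R)) => h a_neq_b.
- by apply/negbTE; rewrite -leNgt; lra.
- by have -> : b < totlen l / 2%:R by lra.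
- by move: a_neq_b => /eqP[]; lra.
Qed.

(* Lengths are positive, so subsets of short sets are short. *)
Lemma short_sub A B : A \subset B -> short l B -> short l A.
Proof.
move=> sAB; rewrite /short (big_setID (A := B) A) /= (setIidPr sAB).
suff : 0 <= \sum_(i in B :\: A) l i by move=> h1 h2; lra.
by apply: sumr_ge0 => i _; apply: ltW.
Qed.

Lemma short_set0 : (0 < n)%N -> short l set0.
Proof.
move=> n_gt0; rewrite /short big_set0 /totlen.
have : 0 < \sum_(i < n) l i.
  rewrite (bigD1 (Ordinal n_gt0)) //=; apply: ltr_pwDl (hpos _) _.
  by apply: sumr_ge0 => i _; apply: ltW.
move=> h; lra.
Qed.

Definition allshort t : bool := [&& short l t.1.1, short l t.1.2 & short l t.2].

Lemma allshort_rot t : allshort (rot3 t) = allshort t.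
Proof.
case: t => [[I J] K]; rewrite /allshort /=.
by case: (short l I); case: (short l J); case: (short l K).
Qed.

(* If the first part of a 3-partition is long, the other two lie in its short
   complement and are therefore short. *)
Lemma long_first_others_short t :
  part3 t -> ~~ short l t.1.1 -> short l t.1.2 && short l t.2.
Proof.
case: t => [[I J] K] /and4P[dIJ dJK dIK _] /= longI.
have shortC : short l (~: I) by rewrite short_setC.
by rewrite !(short_sub _ shortC) // -disjoints_subset disjoint_sym.
Qed.

Lemma short_trichotomy t : part3 t ->
  (allshort t + ~~ short l t.1.1 + ~~ short l t.1.2 + ~~ short l t.2 = 1)%N.
Proof.
move=> pt; have pt2 : part3 (rot3 t) by rewrite part3_rot.
have pt3 : part3 (rot3 (rot3 t)) by rewrite !part3_rot.
have h1 := long_first_others_short pt.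
have h2 := long_first_others_short pt2.
have h3 := long_first_others_short pt3.
move: h1 h2 h3; case: t {pt pt2 pt3} => [[I J] K] /=; rewrite /allshort /=.
case: (short l I); case: (short l J); case: (short l K) => //= h1 h2 h3;
  first [by move: (h1 isT) | by move: (h2 isT) | by move: (h3 isT)].
Qed.

(* An all-short 3-partition has nonempty parts: if I were empty, J and K would
   be complementary, and one of them long. *)
Lemma allshort_first_nonempty t : part3 t -> allshort t -> t.1.1 != set0.
Proof.
case: t => [[I J] K] /and4P[_ _ _ /eqP cover] /and3P[_ sJ sK] /=.
apply/negP => /eqP I0; subst I.
have : short l (~: K).
  apply: (short_sub _ sJ); apply/subsetP => x; rewrite inE => xK.
  by move/setP: cover => /(_ x); rewrite !inE (negbTE xK) orbF.
by rewrite short_setC sK.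
Qed.

Lemma admissible3E t : admissible3 l t = part3 t && allshort t.
Proof.
apply/idP/idP.
  case: t => [[I J] K] /and4P[_ _ _ /and4P[dIJ dJK dIK /andP[cover st]]].
  by rewrite /part3 /allshort /= dIJ dJK dIK cover st.
move=> /andP[pt st].
have n1 := allshort_first_nonempty pt st.
have n2 : (rot3 t).1.1 != set0.
  by apply: allshort_first_nonempty; rewrite ?part3_rot ?allshort_rot.
have n3 : (rot3 (rot3 t)).1.1 != set0.
  by apply: allshort_first_nonempty; rewrite ?part3_rot ?allshort_rot.
move: pt st n1 n2 n3; case: t => [[I J] K] /and4P[dIJ dJK dIK cover] st /= nI nJ nK.
by rewrite /admissible3 /= dIJ dJK dIK cover nI nJ nK.
Qed.

Lemma admissible3_rot t : admissible3 l (rot3 t) = admissible3 l t.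
Proof. by rewrite !admissible3E part3_rot allshort_rot. Qed.

End ShortSets.

Section Counting.
Variables (R : realFieldType) (n : nat) (l : 'I_n -> R).
Hypotheses (hpos : positive_lengths l) (hgen : generic l).
Implicit Types (t : triple n).

Lemma sum_indicator (T : finType) (P b : pred T) :
  \sum_(t | P t) (b t : nat) = #|[set t | P t && b t]|.
Proof.
rewrite -sum1dep_card (bigID b) /= [X in _ + X]big1 ?addn0.
  by apply: eq_big => [t|t /andP[_ ->]].
by move=> t /andP[_ /negbTE ->].
Qed.

Definition long_first : {set triple n} := [set t | part3 t && ~~ short l t.1.1].

(* The trichotomy, with the three long cases exchanged by rotation. *)
Lemma card_admissible3 : #|[set t | admissible3 l t]| + 3 * #|long_first| = 3 ^ n.
Proof.
(* As (rot3 t).1.1 = t.1.2 and (rot3 t).1.2 = t.2, rotation carries the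
   triples with long second (third) part onto those with long first (second). *)
have long_rot (f : triple n -> {set 'I_n}) :
    #|[set t | part3 t && ~~ short l (f (rot3 t))]| = #|[set t | part3 t && ~~ short l (f t)]|.
  rewrite -[RHS](card_preimset _ (@rot3_inj n)); apply: eq_card => t.
  by rewrite !inE part3_rot.
have count_part3 : \sum_(t : triple n | part3 t) 1 = 3 ^ n.
  by rewrite sum1dep_card -card_part3; apply: eq_card => t; rewrite inE.
rewrite -count_part3 (eq_bigr (fun t => allshort l t + ~~ short l t.1.1
                                   + ~~ short l t.1.2 + ~~ short l t.2));
  last by move=> t pt; rewrite short_trichotomy.
rewrite !big_split /= !sum_indicator.
rewrite (long_rot (fun t => t.1.1)) /= (long_rot (fun t => t.1.2)) /=.
rewrite (long_rot (fun t => t.1.1)) /=.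
have -> : [set t | part3 t && allshort l t] = [set t | admissible3 l t].
  by apply/setP => t; rewrite !inE admissible3E.
by rewrite !mulSn mul0n addn0 !addnA.
Qed.

(* Triples with short first part: choose the short set I, then J inside ~: I. *)
Lemma card_long_first :
  #|long_first| + \sum_(I | short l I) 2 ^ (n - #|I|) = 3 ^ n.
Proof.
rewrite -card_part3 -(cardsID [set t | short l t.1.1]) addnC; congr (_ + _).
  transitivity (\sum_(t : triple n | part3 t && short l t.1.1) 1); last first.
    by rewrite sum1dep_card; apply: eq_card => t; rewrite !inE.
  rewrite (partition_big (fun t => t.1.1) (short l)) /=; last by move=> t /andP[].
  apply: eq_bigr => I sI; rewrite -card_part3_first sum1dep_card.
  by apply: eq_card => t; rewrite !inE; case: eqP => [->|]; rewrite ?sI ?andbF ?andbT.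
by apply: eq_card => t; rewrite !inE andbC.
Qed.

(* Each vertex is a rotation class of three admissible triples. *)
Lemma card_vertices : #|vertices l| * 3 = #|[set t | admissible3 l t]|.
Proof.
have classes := cyc_classes_partition (admissible3_rot hpos hgen).
rewrite (card_partition classes) -sum_nat_const; apply: eq_bigr => A /imsetP[t].
move=> adm_t ->; move: adm_t; rewrite inE admissible3E // => /andP[pt st].
symmetry; apply: card_cyc_class => //; first exact: allshort_first_nonempty st.
by apply: (allshort_first_nonempty hpos hgen (t := rot3 t)); rewrite ?part3_rot ?allshort_rot.
Qed.

Lemma sum_short_by_card :
  \sum_(I | short l I) 2 ^ (n - #|I|) = \sum_(k < n.+1) Nshort l k * 2 ^ (n - k).
Proof.
rewrite (partition_big (fun I : {set 'I_n} => (inord #|I| : 'I_n.+1)) xpredT) //=.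
apply: eq_bigr => k _; rewrite /Nshort -sum_nat_const.
have card_lt (I : {set 'I_n}) : #|I| < n.+1.
  by rewrite ltnS; have := max_card (mem I); rewrite card_ord.
apply: eq_big => [I|I /andP[_ /eqP <-]]; last by rewrite inordK.
by rewrite inE -(inj_eq val_inj) /= inordK.
Qed.

Lemma Nshort0 : 0 < n -> Nshort l 0 = 1.
Proof.
move=> n_gt0; rewrite /Nshort -(cards1 (set0 : {set 'I_n})).
by apply: eq_card => I; rewrite !inE cards_eq0; case: eqP => [->|]; rewrite ?short_set0 ?andbF.
Qed.

End Counting.

Theorem mainTheorem1 (R : realFieldType) (n : nat) (l : 'I_n -> R)
  (hn : (4 <= n)%N)
  (hpos : positive_lengths l)
  (htri : strict_triangle l)
  (hgen : generic l) :
  (#|vertices l|%:Z =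
     (\sum_(1 <= k < n.+1) Nshort l k * 2 ^ (n - k))%:Z
     - 2 * 3 ^+ (n - 1) + 2 ^+ n)%R.
Proof.
have n_gt0 : (0 < n)%N by apply: leq_trans hn.
(* 3 #V = #admissible = 3^n - 3 (3^n - sum_(I short) 2^(n-|I|)). *)
have adm := card_admissible3 hpos hgen.
have long_count := card_long_first l.
have vert := card_vertices hpos hgen.
have empty_term : (\sum_(I | short l I) 2 ^ (n - #|I|) =
                   2 ^ n + \sum_(1 <= k < n.+1) Nshort l k * 2 ^ (n - k))%N.
  rewrite sum_short_by_card.
  rewrite -(big_mkord xpredT (fun k => Nshort l k * 2 ^ (n - k))%N) big_ltn //.
  by rewrite Nshort0 // mul1n subn0.
have pow3 : (3 ^ n = 3 * 3 ^ (n - 1))%N by rewrite -expnS subn1 prednK.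
have count : (#|vertices l| + 2 * 3 ^ (n - 1) =
              \sum_(1 <= k < n.+1) Nshort l k * 2 ^ (n - k) + 2 ^ n)%N by lia.
rewrite -!natrX !natz; lia.
Qed.
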